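(* Let $2\leq l\leq t$ be integers, let $s\geq 2$, and let $m_1,\ldots,m_s\geq 1$ be integers. Then $$\sum_{i=1}^s ex(m_i,K_{l,t})\leq ex\left(\sum_{i=1}^s m_i-s+1,\,K_{l,t}\right).$$
   Context: $ex(m,K_{l,t})$ is the maximum number of edges of a simple graph on $m$ vertices containing no copy of the complete bipartite graph $K_{l,t}$ (parts of sizes $l$ and $t$) as a subgraph. *)

From mathcomp Require Import all_boot.
Set Implicit Arguments. Unset Strict Implicit. Unset Printing Implicit Defensive.

Definition simple_graph (m : nat) (E : {set {set 'I_m}}) : bool :=
  [forall e in E, #|e| == 2].

Definition contains_Klt (m l t : nat) (E : {set {set 'I_m}}) : bool :=
  [exists A : {set 'I_m}, exists B : {set 'I_m},
     [&& [disjoint A & B], #|A| == l, #|B| == t &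
         [forall a in A, forall b in B, [set a; b] \in E]]].

Definition ex (m l t : nat) : nat :=
  \max_(E : {set {set 'I_m}} | simple_graph E && ~~ contains_Klt l t E) #|E|.

(* Glue extremal K_{l,t}-free graphs on m_1, ..., m_s vertices along single shared
   vertices: the result has sum m_i - s + 1 vertices and sum ex(m_i, K_{l,t}) edges.
   It is still K_{l,t}-free, since for l, t >= 2 a copy of K_{l,t} has no cut vertex:
   an edge a0 b0 of the copy avoiding the shared vertex drags every edge of the copy
   into the part containing a0 b0, and the copy would then already live in that part. *)

From mathcomp Require Import all_boot zify.
Set Implicit Arguments. Unset Strict Implicit. Unset Printing Implicit Defensive.

Lemma contains_KltP (n l t : nat) (E : {set {set 'I_n}}) :
  reflect (exists A B : {set 'I_n}, [/\ [disjoint A & B], #|A| = l, #|B| = t &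
             forall a b, a \in A -> b \in B -> [set a; b] \in E])
          (contains_Klt l t E).
Proof.
apply: (iffP existsP) => [[A /existsP [B]] | [A [B [dAB cA cB AB]]]].
  case/and4P=> dAB /eqP cA /eqP cB /forallP AB; exists A, B; split=> // a b aA bB.
  by move/implyP: (AB a) => /(_ aA) /forallP /(_ b) /implyP /(_ bB).
exists A; apply/existsP; exists B; rewrite dAB cA cB !eqxx /=.
by apply/forall_inP => a aA; apply/forall_inP => b bB; apply: AB.
Qed.

Lemma leq_ex (n l t : nat) (E : {set {set 'I_n}}) :
  simple_graph E -> ~~ contains_Klt l t E -> #|E| <= ex n l t.
Proof.
move=> sE fE; apply: (leq_bigmax_cond (P := fun E => simple_graph E && ~~ contains_Klt l t E)).
by rewrite sE.
Qed.

Lemma ex_extremal (n l t : nat) : 0 < l -> 0 < t ->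
  exists E : {set {set 'I_n}}, [/\ simple_graph E, ~~ contains_Klt l t E & #|E| = ex n l t].
Proof.
move=> l_gt0 t_gt0.
pose P (E : {set {set 'I_n}}) := simple_graph E && ~~ contains_Klt l t E.
have P_set0 : P set0.
  apply/andP; split; first by apply/forall_inP => e; rewrite inE.
  apply/contains_KltP => -[A [B [_ cA cB AB]]].
  have /card_gt0P [a aA] : 0 < #|A| by rewrite cA.
  have /card_gt0P [b bB] : 0 < #|B| by rewrite cB.
  by have := AB a b aA bB; rewrite inE.
have P_gt0 : 0 < #|P| by apply/card_gt0P; exists set0.
have [E /andP [sE fE] exE] := eq_bigmax_cond (fun E : {set {set 'I_n}} => #|E|) P_gt0.
by exists E; split; rewrite // /ex exE.
Qed.

Lemma card_preimset_codom (aT rT : finType) (h : aT -> rT) (A : {set rT}) :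
  injective h -> A \subset codom h -> #|h @^-1: A| = #|A|.
Proof.
move=> h_inj /subsetP A_sub; rewrite -(card_imset _ h_inj).
apply: eq_card => y; apply/imsetP/idP => [[x] | yA]; first by rewrite inE => hx ->.
by have /codomP [x exy] := A_sub y yA; exists x; rewrite // inE -exy.
Qed.

Lemma contains_Klt_imset (k n l t : nat) (h : 'I_k -> 'I_n) (E : {set {set 'I_k}}) :
  injective h -> 0 < l -> 0 < t ->
  contains_Klt l t [set h @: e | e : {set 'I_k} in E] -> contains_Klt l t E.
Proof.
move=> h_inj l_gt0 t_gt0 /contains_KltP [A [B [dAB cA cB AB]]].
have edge_codom x y : [set x; y] \in [set h @: e | e : {set 'I_k} in E] -> x \in codom h.
  case/imsetP=> e _ exy; have : x \in h @: e by rewrite -exy set21.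
  by case/imsetP=> z _ ->; apply: codom_f.
have A_codom : A \subset codom h.
  apply/subsetP => a aA; have /card_gt0P [b bB] : 0 < #|B| by rewrite cB.
  exact: edge_codom (AB a b aA bB).
have B_codom : B \subset codom h.
  apply/subsetP => b bB; have /card_gt0P [a aA] : 0 < #|A| by rewrite cA.
  by apply: (edge_codom b a); rewrite setUC; apply: AB.
apply/contains_KltP; exists (h @^-1: A), (h @^-1: B); split.
- by rewrite -setI_eq0 -preimsetI (disjoint_setI0 dAB) preimset0.
- by rewrite card_preimset_codom.
- by rewrite card_preimset_codom.
move=> a b; rewrite !inE => ha hb; have /imsetP [e eE hab] := AB _ _ ha hb.
by rewrite (imset_inj h_inj (_ : h @: [set a; b] = h @: e)) // imsetU1 imset_set1.
Qed.

Lemma card_gt1_exists_neq (T : finType) (A : {set T}) (c : T) :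
  1 < #|A| -> exists2 x, x \in A & x != c.
Proof.
rewrite (cardsD1 c) => A_gt1.
have /card_gt0P [x] : 0 < #|A :\ c| by move: A_gt1; case: (c \in A) => /= ; lia.
by rewrite !inE => /andP [xc xA]; exists x.
Qed.

Lemma contains_Klt_cut_vertex (n l t : nat) (E1 E2 : {set {set 'I_n}})
    (X1 X2 : {set 'I_n}) (c : 'I_n) :
  1 < l -> 1 < t ->
  {in E1, forall e : {set 'I_n}, e \subset X1} ->
  {in E2, forall e : {set 'I_n}, e \subset X2} ->
  X1 :&: X2 \subset [set c] ->
  contains_Klt l t (E1 :|: E2) -> contains_Klt l t E1 || contains_Klt l t E2.
Proof.
move=> l_gt1 t_gt1 sub1 sub2 cut /contains_KltP [A [B [dAB cA cB AB]]].
have [a0 a0A a0c] := card_gt1_exists_neq c (leq_trans l_gt1 (eq_leq (esym cA))).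
have [b0 b0B b0c] := card_gt1_exists_neq c (leq_trans t_gt1 (eq_leq (esym cB))).
wlog E1_a0b0 : E1 E2 X1 X2 sub1 sub2 cut AB / [set a0; b0] \in E1 => [hwlog | ].
  have := AB a0 b0 a0A b0B; rewrite inE => /orP [e1 | e2].
    exact: (hwlog E1 E2 X1 X2).
  rewrite orbC; apply: (hwlog E2 E1 X2 X1) => //; first by rewrite setIC.
  by move=> a b aA bB; rewrite [E2 :|: E1]setUC AB.
have in1 x y : [set x; y] \in E1 -> x \in X1.
  by move=> e1; apply: (subsetP (sub1 _ e1)); rewrite set21.
have off_c_in1 x y : x \in X1 -> x != c -> [set x; y] \in E1 :|: E2 -> [set x; y] \in E1.
  move=> x1 xc; rewrite inE => /orP [// | e2].
  have x2 : x \in X2 by apply: (subsetP (sub2 _ e2)); rewrite set21.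
  by have := subsetP cut x; rewrite !inE x1 x2 (negbTE xc) => /(_ isT).
have a0X1 := in1 _ _ E1_a0b0.
have b0X1 : b0 \in X1 by apply: (in1 b0 a0); rewrite setUC.
have BX1 b : b \in B -> b \in X1.
  by move=> bB; apply: (in1 b a0); rewrite setUC; apply: off_c_in1 => //; apply: AB.
have AX1 a : a \in A -> a \in X1.
  move=> aA; apply: (in1 a b0); rewrite setUC; apply: off_c_in1 => //.
  by rewrite setUC; apply: AB.
apply/orP; left; apply/contains_KltP; exists A, B; split=> // a b aA bB.
have ab : a != b by apply: contraTneq bB => <-; rewrite (disjointFr dAB aA).
have [ac | ac] := eqVneq a c; last exact: off_c_in1 (AX1 a aA) ac (AB a b aA bB).
rewrite setUC; apply: off_c_in1 (BX1 b bB) _ _; first by rewrite -ac eq_sym.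
by rewrite setUC; apply: AB.
Qed.

Lemma simple_graph_imset (k n : nat) (h : 'I_k -> 'I_n) (E : {set {set 'I_k}}) :
  injective h -> simple_graph E -> simple_graph [set h @: e | e : {set 'I_k} in E].
Proof.
move=> h_inj /forall_inP sE; apply/forall_inP => _ /imsetP [e eE ->].
by rewrite card_imset // sE.
Qed.

Lemma simple_graphU (n : nat) (E1 E2 : {set {set 'I_n}}) :
  simple_graph E1 -> simple_graph E2 -> simple_graph (E1 :|: E2).
Proof.
move=> /forall_inP sE1 /forall_inP sE2; apply/forall_inP => e.
by rewrite inE => /orP [/sE1 | /sE2].
Qed.

Lemma ex_glue (k1 k2 n l t : nat) (f : 'I_k1 -> 'I_n) (g : 'I_k2 -> 'I_n) (c : 'I_n) :
  1 < l -> 1 < t -> injective f -> injective g ->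
  f @: [set: 'I_k1] :&: g @: [set: 'I_k2] \subset [set c] ->
  ex k1 l t + ex k2 l t <= ex n l t.
Proof.
move=> l_gt1 t_gt1 f_inj g_inj cut.
have [l_gt0 t_gt0] : 0 < l /\ 0 < t by split; apply: ltnW.
have [E1 [sE1 fE1 <-]] := ex_extremal k1 l_gt0 t_gt0.
have [E2 [sE2 fE2 <-]] := ex_extremal k2 l_gt0 t_gt0.
set F1 := [set f @: e | e : {set 'I_k1} in E1].
set F2 := [set g @: e | e : {set 'I_k2} in E2].
have sF1 : simple_graph F1 by apply: simple_graph_imset.
have sF2 : simple_graph F2 by apply: simple_graph_imset.
have F1_sub : {in F1, forall e : {set 'I_n}, e \subset f @: [set: 'I_k1]}.
  by move=> _ /imsetP [e _ ->]; apply/imsetS/subsetT.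
have F2_sub : {in F2, forall e : {set 'I_n}, e \subset g @: [set: 'I_k2]}.
  by move=> _ /imsetP [e _ ->]; apply/imsetS/subsetT.
have F12_disj : F1 :&: F2 = set0.
  apply/setP => e; rewrite !inE; apply/negP => /andP [eF1 eF2].
  have : #|e| <= #|[set c]|.
    by apply/subset_leq_card/(subset_trans _ cut); rewrite subsetI F1_sub ?F2_sub.
  by move/forall_inP: sF1 => /(_ e eF1) /eqP ->; rewrite cards1.
have card_F12 : #|F1 :|: F2| = #|E1| + #|E2|.
  by rewrite cardsU F12_disj cards0 subn0 !card_imset //; apply: imset_inj.
rewrite -card_F12; apply: leq_ex; first exact: simple_graphU.
apply/negP => /(contains_Klt_cut_vertex l_gt1 t_gt1 F1_sub F2_sub cut) /orP [].
  by move/contains_Klt_imset => /(_ f_inj l_gt0 t_gt0); apply/negP.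
by move/contains_Klt_imset => /(_ g_inj l_gt0 t_gt0); apply/negP.
Qed.

Lemma ex_add_le (a b l t : nat) : 1 < l -> 1 < t ->
  ex a.+1 l t + ex b.+1 l t <= ex (a + b).+1 l t.
Proof.
move=> l_gt1 t_gt1; have le_ab : a.+1 <= a + b.+1 by rewrite addnS ltnS leq_addr.
(* 'I_a.+1 and 'I_b.+1 sit in 'I_(a + b.+1) as [0, a] and [a, a + b], sharing only a. *)
rewrite -addnS; apply: (ex_glue (f := widen_ord le_ab) (c := rshift a ord0) l_gt1 t_gt1).
- by move=> i j /(congr1 val) /= /val_inj.
- exact: rshift_inj.
apply/subsetP => _ /setIP [/imsetP [i _ ->] /imsetP [j _ /(congr1 val) /= eij]].
by rewrite inE; apply/eqP/val_inj => /=; have := ltn_ord i; lia.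
Qed.

Lemma ex_sum_le (l t s : nat) (n : 'I_s -> nat) : 1 < l -> 1 < t ->
  \sum_(i < s) ex (n i).+1 l t <= ex (\sum_(i < s) n i).+1 l t.
Proof.
move=> l_gt1 t_gt1; elim: s n => [|s IHs] n; first by rewrite big_ord0.
rewrite !big_ord_recr /=.
exact: leq_trans (leq_add (IHs _) (leqnn _)) (ex_add_le _ _ l_gt1 t_gt1).
Qed.

Theorem lemma2p6 (l t s : nat) (m : 'I_s -> nat) :
  2 <= l -> l <= t -> 2 <= s -> (forall i, 1 <= m i) ->
  \sum_(i < s) ex (m i) l t <= ex ((\sum_(i < s) m i) - s + 1) l t.
Proof.
move=> l_gt1 le_lt _ m_gt0; have t_gt1 := leq_trans l_gt1 le_lt.
rewrite (eq_bigr (fun i => ex (m i).-1.+1 l t)) => [|i _]; last by rewrite prednK.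
rewrite [\sum_(i < s) m i](eq_bigr (fun i => (m i).-1 + 1)) => [|i _]; last first.
  by rewrite addn1 prednK.
rewrite big_split /= sum1_card card_ord addnK addn1.
exact: ex_sum_le.
Qed.
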